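(* There is a sufficiently small absolute constant $c_1>0$ such that the following holds for $d$ sufficiently large. Let $K=\exp(c_1 s)$. For any fixed $\mathbf{A}\in\mathcal{A}_{\mathsf{suc}}$ and any fixed unit vectors $\mathbf{y}_1,\dots,\mathbf{y}_K\in\mathbb{S}^d$, $$\Pr_{\mathbf{v}\sim\frac1{\sqrt d}\mathcal{H}_d}\Big[\|\mathbf{A}\mathbf{x}_{\mathbf{A},\mathbf{v}}\|_\infty\le\xi'\ \wedge\ \|\mathbf{x}_{\mathbf{A},\mathbf{v}}-\mathbf{y}_i\|_2>d^{-8}\ \ \forall i\in[K]\Big]\ge\frac18.$$
   Context: Setting: $d$ large, $\delta\in(0,1)$, $k=d^{1-\delta-o(1)}$, $s=d^{1-\delta/2}\log^2 d$, $\xi=2\exp(-\log^5 d)$, $\xi'=\sqrt d\xi$, $\mathcal{H}_d=\{-1,1\}^d$, $\mathbb{S}^d$ the unit sphere in $\mathbb{R}^d$. A fixed deterministic $(k,n)$-protocol for the correlated orthogonal vector game is given: Alice, on $\mathbf{A}\in\{-1,1\}^{(d/2)\times d}$, sends $\mathbf{M}_\mathbf{A}\in\{0,1\}^{kd}$; after receiving Bob's $\mathbf{v}\in\frac1{\sqrt d}\mathcal{H}_d$, she sends $\mathbf{R}_{\mathbf{A},\mathbf{v}}=(\mathbf{r}_1,\dots,\mathbf{r}_n)$ with each $\mathbf{r}_i$ a row of $\mathbf{A}$ or $\mathsf{nil}$; Bob outputs $\mathbf{x}_{\mathbf{M},\mathbf{v},\mathbf{R}}\in\mathbb{S}^d$,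 a unit vector defined for every $\mathbf{M}\in\{0,1\}^{kd}$, $\mathbf{v}$, $\mathbf{R}\in(\{-1,1\}^d\cup\{\mathsf{nil}\})^n$. Write $\mathbf{x}_{\mathbf{A},\mathbf{v}}=\mathbf{x}_{\mathbf{M}_\mathbf{A},\mathbf{v},\mathbf{R}_{\mathbf{A},\mathbf{v}}}$. The protocol succeeds on $(\mathbf{A},\mathbf{v})$ if $\|\mathbf{A}\mathbf{x}_{\mathbf{A},\mathbf{v}}\|_\infty\le\xi'$ and $|\langle\mathbf{v},\mathbf{x}_{\mathbf{A},\mathbf{v}}\rangle|\ge\sqrt{s/d}$, and it succeeds with probability at least $1/2$ over uniform $(\mathbf{A},\mathbf{v})$. $\mathcal{A}_{\mathsf{suc}}$ is the set of $\mathbf{A}\in\{-1,1\}^{(d/2)\times d}$ on which the protocol succeeds with probability at least $1/4$ over uniform $\mathbf{v}\in\frac1{\sqrt d}\mathcal{H}_d$. *)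

From HB Require Import structures.
From mathcomp Require Import all_boot all_order all_algebra.
From mathcomp Require Import reals sequences exp Rstruct.
Set Implicit Arguments. Unset Strict Implicit. Unset Printing Implicit Defensive.
Import Order.TTheory GRing.Theory Num.Theory.
Local Open Scope ring_scope.

Notation RR := Rdefinitions.R.

(* Boolean hypercube {-1,1}^d : true <-> +1, false <-> -1. *)
Definition hc (d : nat) := {ffun 'I_d -> bool}.
Definition sgn (b : bool) : RR := if b then 1 else -1.

(* A in {-1,1}^{(d/2) x d}, stored as its d/2 rows. *)
Definition mat (d : nat) := {ffun 'I_(d./2) -> hc d}.

Definition vec_of d (h : hc d) : 'I_d -> RR := fun j => sgn (h j) / Num.sqrt (d%:R).

Definition norm2 d (x : 'I_d -> RR) : RR := Num.sqrt (\sum_(j < d) x j ^+ 2).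
Definition dotp d (u x : 'I_d -> RR) : RR := \sum_(j < d) u j * x j.
Definition mulAx d (A : mat d) (x : 'I_d -> RR) : 'I_(d./2) -> RR :=
  fun i => \sum_(j < d) sgn (A i j) * x j.
Definition infnorm m (y : 'I_m -> RR) : RR := \big[Num.max/0]_(i < m) `|y i|.

Definition s_par (delta : RR) (d : nat) : RR :=
  powR (d%:R) (1 - delta / 2) * (ln (d%:R)) ^+ 2.
Definition xi (d : nat) : RR := 2 * expR (- (ln (d%:R)) ^+ 5).
Definition xi' (d : nat) : RR := Num.sqrt (d%:R) * xi d.

(* A deterministic (k,n)-protocol for the correlated orthogonal vector game.
   Alice's message M_A in {0,1}^{kd}; her second message R_{A,v} consists of n
   entries, each a row of A or nil (= None); Bob's output is a unit vector
   defined for every (M, v, R). *)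
Record protocol (d k n : nat) := Protocol {
  msg : mat d -> {ffun 'I_(k * d) -> bool};
  resp : mat d -> hc d -> {ffun 'I_n -> option (hc d)};
  resp_rows : forall A v i,
    match resp A v i with Some r => exists j, r = A j | None => True end;
  out : {ffun 'I_(k * d) -> bool} -> hc d -> {ffun 'I_n -> option (hc d)} ->
        'I_d -> RR;
  out_unit : forall M v R, norm2 (out M v R) = 1
}.

Definition xAv d k n (P : protocol d k n) (A : mat d) (v : hc d) : 'I_d -> RR :=
  out P (msg P A) v (resp P A v).

Definition succeeds (delta : RR) d k n (P : protocol d k n) (A : mat d) (v : hc d) : bool :=
  (infnorm (mulAx A (xAv P A v)) <= xi' d) &&
  (Num.sqrt (s_par delta d / d%:R) <= `|dotp (vec_of v) (xAv P A v)|).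

Definition prob_v d (p : pred (hc d)) : RR :=
  (#|[pred v | p v]|)%:R / (#|{: hc d}|)%:R.
Definition prob_Av d (p : pred (mat d * hc d)) : RR :=
  (#|[pred Av | p Av]|)%:R / (#|{: mat d * hc d}|)%:R.

Definition A_suc (delta : RR) d k n (P : protocol d k n) : pred (mat d) :=
  fun A => 1 / 4 <= prob_v (succeeds delta P A).

(* A uniform sign vector h is nearly orthogonal to every fixed unit vector y:
   by the exponential moment bound cosh x <= exp (x^2/2) (Hoeffding),
   |<h, y>| >= t has probability at most 2 exp (-t^2/2).  When the protocol
   succeeds on v = h / sqrt d we have |<h, x>| >= sqrt s, and since
   |<h, x - y>| <= d |x - y|, an output within d^-8 of some y_i forces
   |<h, y_i>| >= sqrt s - 1.  For A in A_suc the success probability is at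
   least 1/4, and a union bound over the K <= exp (s/8) points y_i loses at
   most 2 K exp (-(sqrt s - 1)^2 / 2) <= 1/8 once s >= 128. *)

From Stdlib Require Import Reals Lra.
From Coquelicot Require Import Coquelicot.

Module CoshBound.
Local Open Scope R_scope.

Lemma le_of_derive_ge0 (f df : R -> R) (x : R) : 0 <= x ->
  (forall y, is_derive f y (df y)) -> (forall y, 0 <= y <= x -> 0 <= df y) ->
  f 0 <= f x.
Proof.
intros Hx Hf Hdf.
destruct (MVT_gen f 0 x df) as [c [Hc E]].
- intros y _; apply Hf.
- intros y _; apply continuity_pt_filterlim.
  apply (ex_derive_continuous (K := R_AbsRing) (V := R_NormedModule)).
  eexists; apply Hf.
- rewrite Rmin_left, Rmax_right in Hc by lra.
  assert (0 <= df c * (x - 0)) by (apply Rmult_le_pos; [apply Hdf | ]; lra).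
  lra.
Qed.

Lemma sinh_le_mul_cosh (x : R) : 0 <= x -> exp x - exp (- x) <= x * (exp x + exp (- x)).
Proof.
intros Hx.
set (f := fun y => y * (exp y + exp (- y)) - (exp y - exp (- y))).
assert (H : f 0 <= f x).
{ apply (le_of_derive_ge0 f (fun y => y * (exp y - exp (- y)))); [exact Hx | |].
  - intros y; unfold f; auto_derive; [exact I | ring].
  - intros y Hy; apply Rmult_le_pos; [lra |].
    destruct (Req_dec y 0) as [-> | Hy0]; [rewrite Ropp_0; lra |].
    generalize (exp_increasing (- y) y ltac:(lra)); lra. }
unfold f in H; rewrite Ropp_0 in H; lra.
Qed.

Lemma cosh_le_exp_sqr_half_nonneg (x : R) : 0 <= x ->
  exp x + exp (- x) <= 2 * exp (x ^ 2 / 2).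
Proof.
intros Hx.
(* [cosh y * exp (- y^2/2)] is nonincreasing because [tanh y <= y]. *)
set (g := fun y => - (exp y + exp (- y)) * exp (- (y ^ 2 / 2))).
assert (H : g 0 <= g x).
{ apply (le_of_derive_ge0 g
    (fun y => (y * (exp y + exp (- y)) - (exp y - exp (- y))) * exp (- (y ^ 2 / 2))));
    [exact Hx | |].
  - intros y; unfold g; auto_derive; [exact I |].
    change RinvImpl.Rinv with Rinv.
    replace (- (y * (y * 1) * / 2)) with (- (y ^ 2 / 2)) by field; field.
  - intros y Hy; apply Rmult_le_pos; [| apply Rlt_le, exp_pos].
    generalize (sinh_le_mul_cosh y (proj1 Hy)); lra. }
unfold g in H.
rewrite Ropp_0, exp_0 in H; replace (- (0 ^ 2 / 2)) with 0 in H by field.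
rewrite exp_0 in H.
assert (Hinv : exp (- (x ^ 2 / 2)) * exp (x ^ 2 / 2) = 1)
  by (rewrite <- exp_plus, Rplus_opp_l; apply exp_0).
assert (0 < exp (x ^ 2 / 2)) by apply exp_pos.
nra.
Qed.

Lemma cosh_le_exp_sqr_half (x : R) : exp x + exp (- x) <= 2 * exp (x ^ 2 / 2).
Proof.
destruct (Rle_dec 0 x) as [Hx | Hx]; [now apply cosh_le_exp_sqr_half_nonneg |].
generalize (cosh_le_exp_sqr_half_nonneg (- x) ltac:(lra)).
rewrite Ropp_involutive; replace ((- x) ^ 2) with (x ^ 2) by ring; lra.
Qed.
End CoshBound.

From HB Require Import structures.
From mathcomp Require Import all_boot all_order all_algebra.
From mathcomp Require Import Rstruct Rstruct_topology reals sequences exp.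
From mathcomp Require Import lra ring.
Set Implicit Arguments. Unset Strict Implicit. Unset Printing Implicit Defensive.
Import Order.TTheory GRing.Theory Num.Theory.
Local Open Scope ring_scope.

Lemma cosh_le_expR_sqr_half (x : RR) : expR x + expR (- x) <= 2 * expR (x ^+ 2 / 2).
Proof.
by have /RleP := CoshBound.cosh_le_exp_sqr_half x; rewrite !RexpE RpowE.
Qed.

Lemma card_le_cover (T I : finType) (S U : pred T) (B : I -> pred T) :
  (forall h, S h -> U h \/ exists i, B i h) ->
  (#|[pred h | S h]| <= #|[pred h | U h]| + \sum_i #|[pred h | B i h]|)%N.
Proof.
move=> cover; rewrite -!sum1_card.
under [X in (_ <= _ + X)%N]eq_bigr do rewrite -sum1_card big_mkcond.
rewrite exchange_big /= !(big_mkcond (fun h => h \in _)) /= -big_split /=.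
apply: leq_sum => h _; rewrite !inE.
case Sh: (S h) => //.
case: (cover h Sh) => [-> // | [i Bi]].
by rewrite (bigD1 i) //= big_mkcond /= inE Bi /=; case: (U h).
Qed.

Lemma card_hc d : #|{: hc d}|%:R = 2 ^+ d :> RR.
Proof. by rewrite /hc card_ffun card_bool card_ord natrX. Qed.

Lemma prob_v_union_bound d (I : finType) (S U : pred (hc d)) (B : I -> pred (hc d)) :
  (forall h, S h -> U h \/ exists i, B i h) ->
  prob_v S <= prob_v U + \sum_i prob_v (B i).
Proof.
move=> /card_le_cover cover; rewrite /prob_v -mulr_suml -mulrDl.
by rewrite ler_wpM2r ?invr_ge0 // -natr_sum -natrD ler_nat.
Qed.

Lemma sum_hc_expR_rademacher d (a : 'I_d -> RR) :
  \sum_(h : hc d) expR (\sum_j sgn (h j) * a j) = \prod_j (expR (a j) + expR (- a j)).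
Proof.
have -> : \prod_j (expR (a j) + expR (- a j)) = \prod_j \sum_(b : bool) expR (sgn b * a j).
  by apply: eq_bigr => j _; rewrite big_bool /= mul1r mulN1r.
by rewrite bigA_distr_bigA /=; apply: eq_bigr => h _; rewrite expR_sum.
Qed.

Lemma sum_hc_expR_rademacher_le d (a : 'I_d -> RR) :
  \sum_(h : hc d) expR (\sum_j sgn (h j) * a j) <= 2 ^+ d * expR (\sum_j a j ^+ 2 / 2).
Proof.
rewrite sum_hc_expR_rademacher expR_sum.
have -> : 2 ^+ d = \prod_(j < d) 2 :> RR by rewrite prodr_const card_ord.
rewrite -big_split /=.
by apply: ler_prod => j _; rewrite addr_ge0 ?expR_ge0 ?cosh_le_expR_sqr_half.
Qed.

Lemma sum_sgn_scale d (h : hc d) (a : 'I_d -> RR) (t : RR) :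
  \sum_j sgn (h j) * (t * a j) = t * \sum_j sgn (h j) * a j.
Proof. by rewrite mulr_sumr; apply: eq_bigr => j _; rewrite mulrCA. Qed.

Lemma prob_v_rademacher_ge d (a : 'I_d -> RR) (t : RR) :
  0 <= t -> \sum_j a j ^+ 2 = 1 ->
  prob_v (fun h : hc d => t <= \sum_j sgn (h j) * a j) <= expR (- (t ^+ 2 / 2)).
Proof.
move=> t_ge0 a_unit.
set S := fun h : hc d => \sum_j sgn (h j) * a j.
have markov : #|[pred h | t <= S h]|%:R * expR (t ^+ 2)
    <= \sum_(h : hc d) expR (\sum_j sgn (h j) * (t * a j)).
  rewrite -sum1_card natr_sum mulr_suml big_mkcond /=.
  apply: ler_sum => h _; rewrite inE; case: ifP => [tS | _]; last exact: expR_ge0.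
  by rewrite mul1r ler_expR sum_sgn_scale expr2 ler_wpM2l.
have sq_ta : \sum_j (t * a j) ^+ 2 / 2 = t ^+ 2 / 2.
  by rewrite -mulr_suml; under eq_bigr do rewrite exprMn; rewrite -mulr_sumr a_unit mulr1.
have := le_trans markov (sum_hc_expR_rademacher_le (fun j => t * a j)).
rewrite sq_ta /prob_v card_hc -ler_pdivlMr ?expR_gt0 // => card_le.
rewrite ler_pdivrMr ?exprn_gt0 //; apply: le_trans card_le _.
rewrite -mulrA -expRN -expRD mulrC ler_wpM2r ?exprn_ge0 // ler_expR; lra.
Qed.

Lemma prob_v_rademacher_abs_ge d (a : 'I_d -> RR) (t : RR) :
  0 <= t -> \sum_j a j ^+ 2 = 1 ->
  prob_v (fun h : hc d => t <= `|\sum_j sgn (h j) * a j|) <= 2 * expR (- (t ^+ 2 / 2)).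
Proof.
move=> t_ge0 a_unit.
have opp_unit : \sum_j (- a j) ^+ 2 = 1 by under eq_bigr do rewrite sqrrN.
have cover h : t <= `|\sum_j sgn (h j) * a j| ->
    t <= \sum_j sgn (h j) * a j \/
    exists _ : 'I_1, t <= \sum_j sgn (h j) * (- a j).
  rewrite ler_normr => /orP [upper | lower]; [by left | right; exists ord0].
  by rewrite (eq_bigr _ (fun j _ => mulrN _ _)) sumrN.
apply: le_trans (prob_v_union_bound cover) _; rewrite big_ord1.
have := prob_v_rademacher_ge t_ge0 a_unit; have := prob_v_rademacher_ge t_ge0 opp_unit.
lra.
Qed.

Lemma coord_le_norm2 d (z : 'I_d -> RR) j : `|z j| <= norm2 z.
Proof.
rewrite /norm2 -sqrtr_sqr ler_sqrt; last by apply: sumr_ge0 => i _; apply: sqr_ge0.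
by rewrite (bigD1 j) //= lerDl; apply: sumr_ge0 => i _; apply: sqr_ge0.
Qed.

Lemma normr_sgn b : `|sgn b| = 1.
Proof. by case: b; rewrite /sgn ?normrN normr1. Qed.

Lemma abs_sum_sgn_le d (h : hc d) (z : 'I_d -> RR) :
  `|\sum_j sgn (h j) * z j| <= d%:R * norm2 z.
Proof.
apply: le_trans (ler_norm_sum _ _ _) _.
under eq_bigr do rewrite normrM normr_sgn mul1r.
apply: le_trans (_ : \sum_(j < d) norm2 z <= _).
  by apply: ler_sum => j _; apply: coord_le_norm2.
by rewrite sumr_const card_ord mulr_natl.
Qed.

Lemma abs_sum_sgn_sub_le d (h : hc d) (x y : 'I_d -> RR) :
  `|\sum_j sgn (h j) * x j| - `|\sum_j sgn (h j) * y j|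
    <= d%:R * norm2 (fun j => x j - y j).
Proof.
apply: le_trans (lerB_dist _ _) _.
rewrite -sumrB (eq_bigr _ (fun j _ => esym (mulrBr _ _ _))).
exact: abs_sum_sgn_le.
Qed.

Lemma dotp_vec_of d (h : hc d) (x : 'I_d -> RR) :
  dotp (vec_of h) x = (\sum_j sgn (h j) * x j) / Num.sqrt d%:R.
Proof. by rewrite /dotp /vec_of mulr_suml; apply: eq_bigr => j _; rewrite mulrAC. Qed.

Lemma abs_sum_sgn_ge_of_dotp d (h : hc d) (x : 'I_d -> RR) (s : RR) :
  (0 < d)%N -> 0 <= s -> Num.sqrt (s / d%:R) <= `|dotp (vec_of h) x| ->
  Num.sqrt s <= `|\sum_j sgn (h j) * x j|.
Proof.
move=> d_gt0 s_ge0; have dR : 0 < d%:R :> RR by rewrite ltr0n.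
rewrite dotp_vec_of normrM normfV (ger0_norm (sqrtr_ge0 _)) ler_pdivlMr ?sqrtr_gt0 //.
by rewrite -sqrtrM ?(divr_ge0 s_ge0 (ltW dR)) // divfK ?gt_eqF.
Qed.

Lemma succeeds_far_or_correlated (delta : RR) d k n (P : protocol d k n) (A : mat d)
    K (y : 'I_K -> 'I_d -> RR) (h : hc d) :
  (0 < d)%N -> 0 <= s_par delta d -> succeeds delta P A h ->
  (infnorm (mulAx A (xAv P A h)) <= xi' d) &&
    [forall i : 'I_K, d%:R ^- 8 < norm2 (fun j => xAv P A h j - y i j)]
  \/ exists i, Num.sqrt (s_par delta d) - 1 <= `|\sum_j sgn (h j) * y i j|.
Proof.
move=> d_gt0 s_ge0 /andP [orth corr].
case far: [forall i : 'I_K, _]; [by left; rewrite orth | right].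
move/negbT/forallPn: far => [i]; rewrite -leNgt => near_y.
exists i.
have d_ge1 : 1 <= d%:R :> RR by rewrite ler1n.
have dist_le1 : d%:R * norm2 (fun j => xAv P A h j - y i j) <= 1.
  apply: le_trans (ler_wpM2l (ler0n _ _) near_y) _.
  rewrite ler_pdivrMr ?exprn_gt0 ?mul1r //; last lra.
  by apply: ler_eXnr.
have := abs_sum_sgn_sub_le h (xAv P A h) (y i).
have := abs_sum_sgn_ge_of_dotp d_gt0 s_ge0 corr.
lra.
Qed.

Lemma ln_ge_1_sub_inv (x : RR) : 0 < x -> 1 - x^-1 <= ln x.
Proof.
move=> x_gt0; have xV_gt0 : 0 < x^-1 by rewrite invr_gt0.
have := @le_ln1Dx _ (x^-1 - 1) ltac:(lra).
by rewrite addrC subrK lnV ?posrE //; lra.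
Qed.

Lemma s_par_ge (delta : RR) d : 0 < delta -> delta < 1 -> (2 ^ 18 <= d)%N ->
  128 <= s_par delta d.
Proof.
move=> delta_gt0 delta_lt1 d_ge.
have dR : 2 ^+ 18 <= d%:R :> RR by rewrite -natrX ler_nat.
have sqrt_ge : 2 ^+ 9 <= Num.sqrt (d%:R : RR).
  rewrite -[X in X <= _]ger0_norm ?exprn_ge0 // -sqrtr_sqr ler_sqrt; last lra.
  by rewrite -exprM.
have pow_ge : Num.sqrt (d%:R : RR) <= powR d%:R (1 - delta / 2).
  by rewrite -powR12_sqrt; [apply: ler_powR; lra | lra].
have ln_ge : 2^-1 <= ln (d%:R : RR).
  apply: le_trans (ln_ge_1_sub_inv _) => //; last lra.
  suff : (d%:R : RR)^-1 <= 2^-1 by lra.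
  by rewrite lef_pV2 ?posrE; lra.
have : 2 ^+ 9 * (2^-1 * 2^-1) <= powR d%:R (1 - delta / 2) * ln (d%:R) ^+ 2 :> RR.
  by rewrite expr2; apply: ler_pM; [lra | lra | lra | apply: ler_pM; lra].
rewrite /s_par; lra.
Qed.

Lemma union_tail_le (s : RR) (K : nat) : 128 <= s -> K%:R <= expR (1 / 8 * s) ->
  K%:R * (2 * expR (- ((Num.sqrt s - 1) ^+ 2 / 2))) <= 1 / 8.
Proof.
move=> s_ge K_le.
have sqrt_sq : Num.sqrt s ^+ 2 = s by rewrite sqr_sqrtr //; lra.
have sqrt_ge4 : 4 <= Num.sqrt s by have := sqrtr_ge0 s; nra.
have tail_le : expR (- ((Num.sqrt s - 1) ^+ 2 / 2)) <= expR (- (s / 4)).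
  by rewrite ler_expR; nra.
have K_tail : K%:R * expR (- ((Num.sqrt s - 1) ^+ 2 / 2)) <= expR (- (s / 8)).
  rewrite (_ : - (s / 8) = 1 / 8 * s - s / 4); last lra.
  by rewrite expRD; apply: ler_pM; rewrite ?expR_ge0.
have : expR (- (s / 8)) * (1 + s / 8) <= 1.
  by rewrite -[1 in X in _ <= X](expR0) -(addNr (s / 8)) expRD ler_wpM2l ?expR_ge0 ?expR_ge1Dx.
have := expR_ge0 (- (s / 8)).
nra.
Qed.

Lemma sumsq_eq1_of_norm2 d (z : 'I_d -> RR) : norm2 z = 1 -> \sum_j z j ^+ 2 = 1.
Proof.
rewrite /norm2 => z_unit.
by rewrite -(sqr_sqrtr (sumr_ge0 _ (fun j _ => sqr_ge0 (z j)))) z_unit expr1n.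
Qed.

Theorem lemma5p3 :
  exists c1 : RR, 0 < c1 /\
  forall (delta : RR), 0 < delta -> delta < 1 ->
  forall (k : nat -> nat),
    (exists eps : nat -> RR,
        (forall e : RR, 0 < e -> exists N : nat, forall m, (N <= m)%N -> `|eps m| < e) /\
        (forall d : nat, (2 <= d)%N -> (k d)%:R = powR (d%:R) (1 - delta - eps d))) ->
  exists d0 : nat, forall d : nat, (d0 <= d)%N ->
  forall (n : nat) (P : protocol d (k d) n),
    1 / 2 <= prob_Av (fun Av => succeeds delta P Av.1 Av.2) ->
  forall A : mat d, A_suc delta P A ->
  forall (K : nat), K%:R <= expR (c1 * s_par delta d) ->
  forall y : 'I_K -> 'I_d -> RR, (forall i, norm2 (y i) = 1) ->
    1 / 8 <= prob_v (fun v =>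
      (infnorm (mulAx A (xAv P A v)) <= xi' d) &&
      [forall i : 'I_K,
         (d%:R ^- 8 < norm2 (fun j => xAv P A v j - y i j))]).
Proof.
exists (1 / 8); split; first lra.
(* Only [A \in A_suc] matters: neither the growth of [k] nor the overall success
   probability of the protocol enters the argument. *)
move=> delta delta_gt0 delta_lt1 k _; exists (2 ^ 18)%N => d d_ge n P _ A A_suc K K_le y y_unit.
have s_ge := s_par_ge delta_gt0 delta_lt1 d_ge.
have s_ge0 : 0 <= s_par delta d by lra.
have d_gt0 : (0 < d)%N by apply: leq_trans d_ge.
have union := prob_v_union_bound
  (fun h => @succeeds_far_or_correlated delta d _ _ P A K y h d_gt0 s_ge0).
have K_tails := union_tail_le s_ge K_le.
set t := Num.sqrt (s_par delta d) - 1 in union K_tails *.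
have t_ge0 : 0 <= t by rewrite subr_ge0 -sqrtr1 ler_sqrt; lra.
have tails : \sum_i prob_v (fun h : hc d => t <= `|\sum_j sgn (h j) * y i j|)
    <= K%:R * (2 * expR (- (t ^+ 2 / 2))).
  apply: le_trans (_ : \sum_(i < K) 2 * expR (- (t ^+ 2 / 2)) <= _).
    apply: ler_sum => i _.
    exact: prob_v_rademacher_abs_ge t_ge0 (sumsq_eq1_of_norm2 (y_unit i)).
  by rewrite sumr_const card_ord (mulr_natl _ K).
move: A_suc; rewrite /A_suc; lra.
Qed.
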